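(* Let $X$ be a Banach space, $k\in\mathbb{N}$, and $(x_s)_{s\in[\mathbb{N}]^k}$ a bounded $k$-sequence in $X$. Let $M\subseteq\mathbb{N}$ be infinite such that $(x_s)_{s\in[M]^k}$ generates a $k$-spreading model $(e_n)_n$ which is Cesàro summable to zero, i.e. $\|\frac1n\sum_{i=1}^n e_i\|_*\to0$. Then for every infinite $L\subseteq M$, $(x_s)_{s\in[L]^k}$ is $k$-Cesàro summable to $0$.
   Context: $[M]^k$: $k$-subsets of $M\subseteq\mathbb{N}$ (increasing enumerations, $M(l)$ the $l$-th element); $M|n=\{M(1),\dots,M(n)\}$. Plegma family: $(s_j)_{j=1}^l$ in $[M]^k$ with $s_1(i)<\dots<s_l(i)$ ($i\le k$), $s_l(i)<s_1(i+1)$ ($i<k$). $(x_s)_{s\in[M]^k}$ generates the Hamel basis $(e_n)$ of a seminormed space $(E,\|\cdot\|_* )$ as a $k$-spreading model if for a null sequence $\delta_l>0$: $|\|\sum_{j=1}^m a_jx_{s_j}\|-\|\sum_{j=1}^m a_je_j\|_*|\le\delta_l$ for all $m\le l$, plegma $(s_j)_{j=1}^m$ in $[M]^k$ with $s_1(1)\ge M(l)$, $a_j\in[-1,1]$. $(x_s)_{s\in[L]^k}$ is $k$-Cesàro summable to $x_0\in X$ if $\binom{n}{k}^{-1}\sum_{s\in[L|n]^k}x_s\to x_0$ in norm as $n\to\infty$. *)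

From Stdlib Require Import Reals Lra Lia List.
Import ListNotations.
Open Scope R_scope.

Record BanachSpace := {
  bs_car :> Type;
  bs_zero : bs_car;
  bs_add : bs_car -> bs_car -> bs_car;
  bs_opp : bs_car -> bs_car;
  bs_scal : R -> bs_car -> bs_car;
  bs_norm : bs_car -> R;
  bs_addA : forall x y z, bs_add x (bs_add y z) = bs_add (bs_add x y) z;
  bs_addC : forall x y, bs_add x y = bs_add y x;
  bs_add0 : forall x, bs_add x bs_zero = x;
  bs_addN : forall x, bs_add x (bs_opp x) = bs_zero;
  bs_scalA : forall a b x, bs_scal a (bs_scal b x) = bs_scal (a * b) x;
  bs_scal1 : forall x, bs_scal 1 x = x;
  bs_scalDr : forall a x y, bs_scal a (bs_add x y) = bs_add (bs_scal a x) (bs_scal a y);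
  bs_scalDl : forall a b x, bs_scal (a + b) x = bs_add (bs_scal a x) (bs_scal b x);
  bs_norm_triangle : forall x y, bs_norm (bs_add x y) <= bs_norm x + bs_norm y;
  bs_norm_scal : forall a x, bs_norm (bs_scal a x) = Rabs a * bs_norm x;
  bs_norm_eq0 : forall x, bs_norm x = 0 -> x = bs_zero;
  bs_complete : forall u : nat -> bs_car,
    (forall eps, 0 < eps -> exists N, forall p q, (N <= p)%nat -> (N <= q)%nat ->
        bs_norm (bs_add (u p) (bs_opp (u q))) < eps) ->
    exists l, forall eps, 0 < eps -> exists N, forall n, (N <= n)%nat ->
        bs_norm (bs_add (u n) (bs_opp l)) < eps
}.

Definition vsum (X : BanachSpace) (l : list X) : X :=
  fold_right (bs_add X) (bs_zero X) l.

(** Infinite subsets of N are represented by their strictly increasing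
    enumeration M : nat -> nat, with M(l) (1-based, as in the paper) = M (l-1). *)
Definition strictly_increasing (M : nat -> nat) : Prop :=
  forall i j, (i < j)%nat -> (M i < M j)%nat.

Definition in_kset (k : nat) (P : nat -> Prop) (s : list nat) : Prop :=
  length s = k /\
  (forall i, (S i < k)%nat -> (nth i s 0 < nth (S i) s 0)%nat) /\
  (forall x, In x s -> P x).

Definition in_range (M : nat -> nat) (x : nat) : Prop := exists i, M i = x.

(** (ss 0, ..., ss (m-1)) is a plegma family in [M]^k
    (s_j(i) of the paper is nth (i-1) (ss (j-1)) 0). *)
Definition plegma (k : nat) (M : nat -> nat) (ss : nat -> list nat) (m : nat) : Prop :=
  (forall j, (j < m)%nat -> in_kset k (in_range M) (ss j)) /\
  (forall i j j', (i < k)%nat -> (j < j')%nat -> (j' < m)%nat ->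
      (nth i (ss j) 0 < nth i (ss j') 0)%nat) /\
  (forall i, (S i < k)%nat -> (0 < m)%nat ->
      (nth i (ss (m - 1)%nat) 0 < nth (S i) (ss 0%nat) 0)%nat).

(** A seminorm on c00 = span of the Hamel basis (e_n).  Elements of the space
    are finitely supported sequences a : nat -> R, representing
    sum_n a n e_(n+1); ns is the seminorm ||.||_* . *)
Definition fin_supp (a : nat -> R) : Prop := exists N, forall n, (N <= n)%nat -> a n = 0.

Definition c00_seminorm (ns : (nat -> R) -> R) : Prop :=
  (forall a b, fin_supp a -> fin_supp b -> ns (fun n => a n + b n) <= ns a + ns b) /\
  (forall c a, fin_supp a -> ns (fun n => c * a n) = Rabs c * ns a).

(** sum_{j=1}^m a_j e_j, as an element of c00 (0-based coefficient a j for e_(j+1)). *)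
Definition trunc (m : nat) (a : nat -> R) : nat -> R :=
  fun n => if Nat.ltb n m then a n else 0.

Definition generates_spreading_model (X : BanachSpace) (k : nat)
  (x : list nat -> X) (M : nat -> nat) (ns : (nat -> R) -> R) : Prop :=
  exists delta : nat -> R, (forall l, 0 < delta l) /\ Un_cv delta 0 /\
  forall (l m : nat) (ss : nat -> list nat) (a : nat -> R),
    (1 <= l)%nat -> (m <= l)%nat -> plegma k M ss m ->
    (0 < m)%nat -> (M (l - 1)%nat <= nth 0 (ss 0%nat) 0)%nat ->
    (forall j, (j < m)%nat -> -1 <= a j <= 1) ->
    Rabs (bs_norm X (vsum X (map (fun j => bs_scal X (a j) (x (ss j))) (seq 0 m)))
          - ns (trunc m a)) <= delta l.

Definition cesaro_zero (ns : (nat -> R) -> R) : Prop :=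
  Un_cv (fun n => ns (trunc n (fun _ => / INR n))) 0.

Fixpoint choose (l : list nat) (k : nat) : list (list nat) :=
  match l, k with
  | _, O => [[]]
  | [], S _ => []
  | y :: t, S k' => map (cons y) (choose t k') ++ choose t (S k')
  end.

Definition k_cesaro_summable (X : BanachSpace) (k : nat) (x : list nat -> X)
  (L : nat -> nat) (x0 : X) : Prop :=
  forall eps, 0 < eps -> exists N, forall n, (N <= n)%nat ->
    bs_norm X (bs_add X
      (bs_scal X (/ Binomial.C n k) (vsum X (map x (choose (map L (seq 0 n)) k))))
      (bs_opp X x0)) < eps.

(* Write S_n = sum of y s over the (k+1)-subsets s of [0,n), where
   y s = x (L s), and let P = C(n,k+1), Q = C(n,k).  Fix m with
   ||(e_1 + ... + e_m)/m||_* < eps/4 and l >= m with delta_l < eps/4.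
   For each shift t < m, S_n is the sum over the translates s + t of the
   subsets s of a window [l-1, l-1+W) with W = n-m-l+1, up to O(Q) further
   terms.  Averaging over t gives
       m S_n = sum_s (y s + y (s+1) + ... + y (s+m-1)) + O(m Q).
   When consecutive elements of s are at distance >= m, the m translates of
   L s form a plegma family beyond M(l-1), so the spreading model bounds the
   block by m (eps/4 + eps/4); the remaining subsets number O(m Q).  Hence
   ||S_n|| <= P eps/2 + O(Q), and Q/P = (k+1)/(n-k) -> 0 gives ||S_n||/P < eps. *)

From Stdlib Require Import Reals Lra Lia List Arith.
Import ListNotations.
Open Scope R_scope.

Section VectorSums.

Variable X : BanachSpace.

Lemma add0l (u : X) : bs_add X (bs_zero X) u = u.
Proof. rewrite bs_addC. apply bs_add0. Qed.

Lemma scal0l (u : X) : bs_scal X 0 u = bs_zero X.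
Proof.
  set (z := bs_scal X 0 u).
  assert (Hzz : bs_add X z z = z)
    by (unfold z; rewrite <- bs_scalDl; f_equal; ring).
  assert (Hcancel : bs_add X (bs_add X z z) (bs_opp X z) = bs_add X z (bs_opp X z))
    by (rewrite Hzz; reflexivity).
  rewrite <- bs_addA, bs_addN, bs_add0 in Hcancel. exact Hcancel.
Qed.

Lemma scal0r (a : R) : bs_scal X a (bs_zero X) = bs_zero X.
Proof. rewrite <- (scal0l (bs_zero X)), bs_scalA, Rmult_0_r. reflexivity. Qed.

Lemma norm0 : bs_norm X (bs_zero X) = 0.
Proof. rewrite <- (scal0l (bs_zero X)), bs_norm_scal, Rabs_R0. ring. Qed.

Lemma opp0 : bs_opp X (bs_zero X) = bs_zero X.
Proof. rewrite <- (bs_addN X (bs_zero X)) at 2. rewrite add0l. reflexivity. Qed.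

Lemma norm_vsum_le (l : list X) (b : R) :
  (forall v, In v l -> bs_norm X v <= b) ->
  bs_norm X (vsum X l) <= INR (length l) * b.
Proof.
  induction l as [|v l IH]; intro Hb; cbn [length vsum fold_right].
  - rewrite norm0. simpl. lra.
  - eapply Rle_trans; [apply bs_norm_triangle|].
    assert (Hv := Hb v (or_introl eq_refl)).
    assert (Hl : bs_norm X (vsum X l) <= INR (length l) * b)
      by (apply IH; intros; apply Hb; right; auto).
    rewrite S_INR. unfold vsum in Hl. lra.
Qed.

Lemma vsum_filter {A} (f : A -> X) (p : A -> bool) (l : list A) :
  vsum X (map f l) = bs_add X (vsum X (map f (filter p l)))
                       (vsum X (map f (filter (fun z => negb (p z)) l))).
Proof.
  induction l as [|a l IH]; cbn [map filter].
  - unfold vsum; simpl. rewrite bs_add0. reflexivity.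
  - unfold vsum in *. destruct (p a); cbn [negb map fold_right]; rewrite IH.
    + apply bs_addA.
    + rewrite !bs_addA. f_equal. apply bs_addC.
Qed.

Lemma vsum_add {A} (f g : A -> X) (l : list A) :
  vsum X (map (fun t => bs_add X (f t) (g t)) l) =
  bs_add X (vsum X (map f l)) (vsum X (map g l)).
Proof.
  induction l as [|a l IH]; cbn [map].
  - unfold vsum; simpl. rewrite bs_add0. reflexivity.
  - unfold vsum in *. cbn [fold_right]. rewrite IH, !bs_addA. f_equal.
    rewrite <- !bs_addA. f_equal. apply bs_addC.
Qed.

Lemma vsum_const {A} (v : X) (l : list A) :
  vsum X (map (fun _ => v) l) = bs_scal X (INR (length l)) v.
Proof.
  induction l as [|a l IH]; cbn [map length].
  - rewrite scal0l. reflexivity.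
  - unfold vsum in *. cbn [fold_right]. rewrite IH, S_INR, bs_scalDl, bs_scal1.
    apply bs_addC.
Qed.

Lemma vsum_scal (a : R) (l : list X) :
  bs_scal X a (vsum X l) = vsum X (map (bs_scal X a) l).
Proof.
  induction l as [|v l IH]; cbn [map].
  - apply scal0r.
  - unfold vsum in *. cbn [fold_right]. rewrite bs_scalDr, IH. reflexivity.
Qed.

Lemma vsum_exchange {A B} (f : A -> B -> X) (P : list A) (T : list B) :
  vsum X (map (fun s => vsum X (map (f s) T)) P) =
  vsum X (map (fun t => vsum X (map (fun s => f s t) P)) T).
Proof.
  induction P as [|a P IH]; cbn [map].
  - rewrite vsum_const, scal0r. reflexivity.
  - change (bs_add X (vsum X (map (f a) T))
              (vsum X (map (fun s => vsum X (map (f s) T)) P)) =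
            vsum X (map (fun t => bs_add X (f a t) (vsum X (map (fun s => f s t) P))) T)).
    rewrite IH, vsum_add. reflexivity.
Qed.

Lemma norm_average_decomp {A} (u : X) (v : A -> X) (T : list A) (e : R) :
  (forall t, In t T -> exists w, u = bs_add X (v t) w /\ bs_norm X w <= e) ->
  INR (length T) * bs_norm X u <= bs_norm X (vsum X (map v T)) + INR (length T) * e.
Proof.
  intro Hdec.
  assert (Hsum : exists W, vsum X (map (fun _ => u) T) = bs_add X (vsum X (map v T)) W
                           /\ bs_norm X W <= INR (length T) * e).
  { induction T as [|a T IH]; cbn [map length].
    - exists (bs_zero X). split; [rewrite bs_add0; reflexivity|]. rewrite norm0. simpl. lra.
    - destruct (Hdec a (or_introl eq_refl)) as [w [Hu Hw]].
      destruct IH as [W [HW HWn]]; [intros; apply Hdec; right; auto|].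
      exists (bs_add X w W). split.
      + unfold vsum in *. cbn [fold_right]. rewrite HW. rewrite Hu at 1.
        rewrite !bs_addA. f_equal. rewrite <- !bs_addA. f_equal. apply bs_addC.
      + rewrite S_INR. eapply Rle_trans; [apply bs_norm_triangle|]. lra. }
  destruct Hsum as [W [HW HWn]].
  rewrite vsum_const in HW.
  assert (Hn : bs_norm X (bs_scal X (INR (length T)) u) = INR (length T) * bs_norm X u)
    by (rewrite bs_norm_scal, Rabs_right; [reflexivity | apply Rle_ge, pos_INR]).
  rewrite <- Hn, HW. eapply Rle_trans; [apply bs_norm_triangle|]. lra.
Qed.

End VectorSums.

Fixpoint binom (n k : nat) : nat :=
  match n, k with
  | _, O => 1%nat
  | O, S _ => 0%nat
  | S n', S k' => (binom n' k' + binom n' (S k'))%nat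
  end.

Lemma binom_0 n : binom n 0 = 1%nat.
Proof. destruct n; reflexivity. Qed.

Lemma binom_gt n : forall k, (n < k)%nat -> binom n k = 0%nat.
Proof.
  induction n; intros k Hk; destruct k; try lia; try reflexivity.
  cbn [binom]. rewrite !IHn; lia.
Qed.

Lemma binom_nn n : binom n n = 1%nat.
Proof. induction n; [reflexivity|]. cbn [binom]. rewrite IHn, binom_gt; lia. Qed.

Lemma binom_succ_le n k : (binom n k <= binom (S n) k)%nat.
Proof. destruct k; [rewrite !binom_0; lia | cbn [binom]; lia]. Qed.

Lemma binom_mono n n' k : (n <= n')%nat -> (binom n k <= binom n' k)%nat.
Proof. induction 1; [lia | eapply Nat.le_trans; [exact IHle | apply binom_succ_le]]. Qed.

Lemma binom_pos n k : (k <= n)%nat -> (0 < binom n k)%nat.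
Proof.
  revert k; induction n; intros k Hk; destruct k as [|k];
    try (rewrite binom_0; lia); try lia.
  cbn [binom]. specialize (IHn k). lia.
Qed.

Lemma binom_succ_ratio n : forall k, (binom n (S k) * S k = binom n k * (n - k))%nat.
Proof.
  induction n; intro k.
  - cbn. destruct k; cbn; lia.
  - destruct k.
    + cbn [binom]. rewrite !binom_0. specialize (IHn 0%nat). rewrite binom_0 in IHn. lia.
    + change (binom (S n) (S (S k))) with (binom n (S k) + binom n (S (S k)))%nat.
      change (binom (S n) (S k)) with (binom n k + binom n (S k))%nat.
      assert (H1 := IHn (S k)). assert (H2 := IHn k).
      destruct (Nat.le_gt_cases (S k) n).
      * replace (S n - S k)%nat with (S (n - S k)) by lia.
        replace (n - k)%nat with (S (n - S k)) in H2 by lia. nia.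
      * rewrite (binom_gt n (S (S k))) by lia. rewrite (binom_gt n (S k)) in * by lia.
        replace (S n - S k)%nat with 0%nat by lia. nia.
Qed.

Lemma binom_growth r p k : (binom (r + p) (S k) - binom p (S k) <= r * binom (r + p) k)%nat.
Proof.
  induction r; [cbn; lia|].
  replace (S r + p)%nat with (S (r + p)) by lia. cbn [binom].
  assert (binom p (S k) <= binom (r + p) (S k))%nat by (apply binom_mono; lia).
  assert (binom (r + p) k <= binom (S (r + p)) k)%nat by apply binom_succ_le.
  cbn [binom] in *. nia.
Qed.

Lemma binom_C n : forall k, (k <= n)%nat -> INR (binom n k) = Binomial.C n k.
Proof.
  assert (HC0 : forall n, Binomial.C n 0 = 1).
  { intro m. unfold Binomial.C. rewrite Nat.sub_0_r. cbn [fact].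
    assert (H := INR_fact_neq_0 m). simpl INR. field. auto. }
  induction n; intros k Hk.
  - destruct k; [|lia]. rewrite HC0. reflexivity.
  - destruct k; [rewrite binom_0, HC0; reflexivity|]. cbn [binom].
    destruct (Nat.eq_dec k n).
    + subst. rewrite binom_nn, (binom_gt n (S n)) by lia.
      unfold Binomial.C. rewrite Nat.sub_diag. cbn [fact].
      assert (H := INR_fact_neq_0 (S n)). simpl INR. field. auto.
    + rewrite plus_INR, !IHn by lia. apply Binomial.pascal. lia.
Qed.

(* C(n,k)/C(n,k+1) = (k+1)/(n-k) tends to 0, so any fixed multiple of C(n,k)
   is eventually below any fixed fraction of C(n,k+1). *)
Lemma binom_ratio_small k (K eps : R) : 0 < eps ->
  exists N, forall n, (N <= n)%nat -> K * INR (binom n k) < INR (binom n (S k)) * eps.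
Proof.
  intro Heps. set (Kp := Rmax K 0).
  destruct (INR_unbounded (Kp * INR (S k) / eps)) as [N0 HN0].
  exists (N0 + S k)%nat. intros n Hn.
  assert (Hratio := binom_succ_ratio n k).
  apply (f_equal INR) in Hratio. rewrite !mult_INR in Hratio.
  set (P := INR (binom n (S k))) in *. set (Q := INR (binom n k)) in *.
  assert (HP : 0 < P) by (apply (lt_INR 0), binom_pos; lia).
  assert (HQ : 0 <= Q) by apply pos_INR.
  assert (HKp : K <= Kp /\ 0 <= Kp) by (split; [apply Rmax_l | apply Rmax_r]).
  assert (Hnk : INR N0 < INR (n - k)) by (apply lt_INR; lia).
  assert (Hk : 0 < INR (S k)) by (apply (lt_INR 0); lia).
  assert (HKeps : Kp * INR (S k) < eps * INR (n - k)).
  { apply (Rmult_lt_reg_r (/ eps)); [apply Rinv_0_lt_compat; lra|].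
    replace (eps * INR (n - k) * / eps) with (INR (n - k)) by (field; lra).
    unfold Rdiv in HN0. lra. }
  assert (Hnk0 : 0 < INR (n - k)) by (pose proof (pos_INR N0); lra).
  apply (Rmult_lt_reg_r (INR (n - k))); [exact Hnk0|].
  apply Rle_lt_trans with (Kp * (Q * INR (n - k))).
  - rewrite <- Rmult_assoc. apply Rmult_le_compat_r; [lra|].
    apply Rmult_le_compat_r; [exact HQ | apply HKp].
  - rewrite <- Hratio. nra.
Qed.

Section Combinatorics.

Open Scope nat_scope.
Lemma length_choose l : forall k, length (choose l k) = binom (length l) k.
Proof.
  induction l as [|y t IH]; intro k; destruct k; try reflexivity.
  cbn [choose length]. rewrite length_app, length_map, !IH. reflexivity.
Qed.

Lemma choose_map (f : nat -> nat) l : forall k, choose (map f l) k = map (map f) (choose l k).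
Proof.
  induction l as [|y t IH]; intro k; destruct k; try reflexivity.
  cbn [map choose]. rewrite map_app, !IH, !map_map. reflexivity.
Qed.

Lemma filter_choose (q : nat -> bool) l : forall k,
  filter (forallb q) (choose l k) = choose (filter q l) k.
Proof.
  induction l as [|y t IH]; intro k; destruct k; try reflexivity.
  - destruct (filter q (y :: t)); reflexivity.
  - cbn [choose filter]. rewrite filter_app, IH, filter_map_swap. cbn [forallb].
    destruct (q y); cbn [andb].
    + cbn [choose]. rewrite <- !IH. reflexivity.
    + rewrite (filter_false (choose t k)). reflexivity.
Qed.

Lemma in_kset_weaken k (P Q : nat -> Prop) s :
  (forall u, P u -> Q u) -> in_kset k P s -> in_kset k Q s.
Proof. intros HPQ [Hl [Hs HP]]. repeat split; auto. Qed.

Lemma in_kset_cons k (P : nat -> Prop) a s :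
  in_kset k P s -> P a -> (forall u, In u s -> a < u) -> in_kset (S k) P (a :: s).
Proof.
  intros [Hl [Hs HP]] Ha Hlt. split; [cbn; lia|]. split.
  - intros [|i] Hi; cbn [nth].
    + destruct s as [|u s']; [cbn in Hl; lia|]. apply Hlt. left. reflexivity.
    + apply Hs. lia.
  - intros u [<-|Hu]; auto.
Qed.

Lemma in_kset_map k (P Q : nat -> Prop) (f : nat -> nat) s :
  strictly_increasing f -> (forall u, P u -> Q (f u)) ->
  in_kset k P s -> in_kset k Q (map f s).
Proof.
  intros Hf HPQ [Hl [Hs HP]]. split; [rewrite length_map; auto|]. split.
  - intros i Hi. rewrite !(nth_indep (map f s) 0 (f 0)) by (rewrite length_map; lia).
    rewrite !map_nth. apply Hf, Hs, Hi.
  - intros v Hv. apply in_map_iff in Hv. destruct Hv as [u [<- Hu]]. auto.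
Qed.

Lemma in_kset_choose_seq n : forall a k s, In s (choose (seq a n) k) ->
  in_kset k (fun u => a <= u < a + n) s.
Proof.
  induction n; intros a k s Hs.
  - destruct k; cbn in Hs; [|contradiction].
    destruct Hs as [<-|[]]. repeat split; cbn; intros; lia || contradiction.
  - destruct k as [|k].
    + destruct (seq a (S n)); cbn in Hs; destruct Hs as [<-|[]];
        repeat split; cbn; intros; lia || contradiction.
    + cbn [seq choose] in Hs. apply in_app_or in Hs. destruct Hs as [Hs|Hs].
      * apply in_map_iff in Hs. destruct Hs as [s' [<- Hs']].
        apply in_kset_cons; [| lia |].
        -- eapply in_kset_weaken; [|apply IHn, Hs']. cbv beta. lia.
        -- intros u Hu. destruct (IHn _ _ _ Hs') as [_ [_ H]]. specialize (H u Hu). lia.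
      * eapply in_kset_weaken; [|apply IHn, Hs]. cbv beta. lia.
Qed.

Fixpoint gapb (m : nat) (s : list nat) : bool :=
  match s with
  | a :: (b :: _) as t => andb (Nat.leb (a + m) b) (gapb m t)
  | _ => true
  end.

Lemma gapb_spec m s : gapb m s = true ->
  forall i, S i < length s -> nth i s 0 + m <= nth (S i) s 0.
Proof.
  induction s as [|a t IH]; intros H i Hi; [cbn in Hi; lia|].
  destruct t as [|b t']; [cbn in Hi; lia|].
  cbn [gapb] in H. apply andb_prop in H. destruct H as [H1 H2].
  destruct i as [|i].
  - cbn [nth]. apply Nat.leb_le. exact H1.
  - apply (IH H2 i). cbn [length] in *. lia.
Qed.

Lemma length_filter_mono {A} (p q : A -> bool) (l : list A) :
  (forall z, p z = true -> q z = true) -> length (filter p l) <= length (filter q l).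
Proof.
  intro H. induction l as [|a l IH]; cbn; [lia|].
  destruct (p a) eqn:E; [rewrite (H a E); cbn; lia | destruct (q a); cbn; lia].
Qed.

Lemma length_filter_orb {A} (p q : A -> bool) (l : list A) :
  length (filter (fun z => orb (p z) (q z)) l) <= length (filter p l) + length (filter q l).
Proof. induction l as [|a l IH]; cbn; [lia|]. destruct (p a), (q a); cbn; lia. Qed.

Definition head_below (c : nat) (s : list nat) : bool :=
  match s with u :: _ => Nat.ltb u c | [] => false end.

Lemma count_head_below n : forall b c k,
  length (filter (head_below c) (choose (seq b n) (S k))) <= (c - b) * binom n k.
Proof.
  induction n; intros b c k; [apply Nat.le_0_l|].
  cbn [seq choose]. rewrite filter_app, length_app, filter_map_swap, length_map.
  cbn [head_below]. specialize (IHn (S b) c k).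
  assert (binom n k <= binom (S n) k) by apply binom_succ_le.
  destruct (Nat.ltb b c) eqn:E.
  - apply Nat.ltb_lt in E. rewrite filter_true, length_choose, length_seq. nia.
  - apply Nat.ltb_ge in E. rewrite filter_false. replace (c - S b) with 0 in IHn by lia.
    cbn. lia.
Qed.

Lemma count_nongap (m : nat) n : forall b k,
  length (filter (fun s => negb (gapb m s)) (choose (seq b n) (S k))) <= k * m * binom n k.
Proof.
  induction n; intros b k; [apply Nat.le_0_l|].
  cbn [seq choose]. rewrite filter_app, length_app, filter_map_swap, length_map.
  destruct k as [|k].
  - replace (choose (seq (S b) n) 0) with [@nil nat] by (destruct n; reflexivity).
    specialize (IHn (S b) 0). cbn in *. lia.
  - assert (Hsplit :
      length (filter (fun z => negb (gapb m (b :: z))) (choose (seq (S b) n) (S k)))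
      <= length (filter (fun z => orb (head_below (b + m) z) (negb (gapb m z)))
                        (choose (seq (S b) n) (S k)))).
    { apply length_filter_mono. intros [|c z] Hz; [discriminate|].
      cbn [gapb head_below] in *. destruct (Nat.leb (b + m) c) eqn:E1.
      - cbn [andb] in Hz. rewrite Hz. apply Bool.orb_true_r.
      - apply Nat.leb_gt, Nat.ltb_lt in E1. rewrite E1. reflexivity. }
    assert (H2 := length_filter_orb (head_below (b + m)) (fun z => negb (gapb m z))
                    (choose (seq (S b) n) (S k))).
    assert (H3 := count_head_below n (S b) (b + m) k).
    assert (H4 := IHn (S b) k). assert (H5 := IHn (S b) (S k)).
    change (binom (S n) (S k)) with (binom n k + binom n (S k)). nia.
Qed.

Definition shift (t : nat) (s : list nat) : list nat := map (fun u => u + t) s.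

Lemma shift_seq t W : forall c, shift t (seq c W) = seq (c + t) W.
Proof. induction W; intro c; cbn; [reflexivity|]. unfold shift in *. rewrite IHW. reflexivity. Qed.

Definition in_window (lo W u : nat) : bool := andb (Nat.leb lo u) (Nat.ltb u (lo + W)).

Lemma filter_seq_window lo W n : lo + W <= n ->
  filter (in_window lo W) (seq 0 n) = seq lo W.
Proof.
  intro H. replace n with (lo + (W + (n - lo - W))) by lia.
  rewrite !seq_app, !filter_app. cbn [Nat.add].
  rewrite (filter_ext_in _ (fun _ => false) (seq 0 lo)),
          (filter_ext_in _ (fun _ => true) (seq lo W)),
          (filter_ext_in _ (fun _ => false) (seq (lo + W) _)),
          !filter_false, filter_true, app_nil_r by
    (intros u Hu; apply in_seq in Hu; unfold in_window;
     destruct (Nat.leb_spec lo u), (Nat.ltb_spec u (lo + W)); cbn; lia || reflexivity).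
  reflexivity.
Qed.

End Combinatorics.

Lemma cesaro_mean_norm (X : BanachSpace) (k n : nat) (x : list nat -> X) (L : nat -> nat) :
  (k <= n)%nat ->
  bs_norm X (bs_add X (bs_scal X (/ Binomial.C n k) (vsum X (map x (choose (map L (seq 0 n)) k))))
                      (bs_opp X (bs_zero X)))
  = bs_norm X (vsum X (map (fun s => x (map L s)) (choose (seq 0 n) k))) / INR (binom n k).
Proof.
  intro Hkn. assert (HP : 0 < INR (binom n k)) by (apply (lt_INR 0), binom_pos, Hkn).
  rewrite opp0, bs_add0, choose_map, map_map, bs_norm_scal, <- binom_C, Rabs_right
    by (auto || (apply Rle_ge, Rlt_le, Rinv_0_lt_compat; exact HP)).
  unfold Rdiv. apply Rmult_comm.
Qed.

Section AveragingEstimate.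

Variable X : BanachSpace.
Variable k : nat.
Variable y : list nat -> X.
Variable B : R.
Hypothesis B_ge0 : 0 <= B.
Hypothesis y_bounded : forall s, in_kset (S k) (fun _ => True) s -> bs_norm X (y s) <= B.

Lemma shift_in_kset t (P Q : nat -> Prop) s :
  (forall u, P u -> Q (u + t)%nat) -> in_kset (S k) P s -> in_kset (S k) Q (shift t s).
Proof. intro HPQ. apply in_kset_map; [intros i j Hij; lia | exact HPQ]. Qed.

Lemma window_split n c W t : (c + t + W <= n)%nat ->
  exists E, vsum X (map y (choose (seq 0 n) (S k))) =
            bs_add X (vsum X (map (fun s => y (shift t s)) (choose (seq c W) (S k)))) E
         /\ bs_norm X E <= INR ((n - W) * binom n k) * B.
Proof.
  intro Hn. set (q := in_window (c + t) W).
  exists (vsum X (map y (filter (fun z => negb (forallb q z)) (choose (seq 0 n) (S k))))).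
  split.
  - rewrite (vsum_filter X y (forallb q)). f_equal.
    unfold q. rewrite filter_choose, filter_seq_window, <- shift_seq by exact Hn.
    unfold shift. rewrite choose_map, map_map. reflexivity.
  - eapply Rle_trans; [apply norm_vsum_le with (b := B)|].
    + intros v Hv. apply in_map_iff in Hv. destruct Hv as [s [<- Hs]].
      apply filter_In in Hs. apply y_bounded.
      eapply in_kset_weaken; [|apply in_kset_choose_seq, Hs]. trivial.
    + apply Rmult_le_compat_r; [exact B_ge0|]. apply le_INR. rewrite length_map.
      assert (Hcount := filter_length (forallb q) (choose (seq 0 n) (S k))).
      unfold q in Hcount. rewrite filter_choose, filter_seq_window, !length_choose,
        !length_seq in Hcount by exact Hn.
      assert (Hgrow := binom_growth (n - W) W k).
      replace (n - W + W)%nat with n in Hgrow by lia. unfold q. lia.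
Qed.

Lemma averaging_estimate (m c n : nat) (beta : R) :
  (1 <= m)%nat -> (m + c <= n)%nat -> 0 <= beta ->
  (forall s, in_kset (S k) (fun u => c <= u)%nat s -> gapb m s = true ->
     bs_norm X (vsum X (map (fun t => y (shift t s)) (seq 0 m))) <= INR m * beta) ->
  bs_norm X (vsum X (map y (choose (seq 0 n) (S k)))) <=
    INR (binom n (S k)) * beta + INR ((k * m + m + c) * binom n k) * B.
Proof.
  intros Hm Hn Hbeta Hblock.
  set (W := (n - m - c)%nat). set (D := choose (seq c W) (S k)).
  set (block := fun s => vsum X (map (fun t => y (shift t s)) (seq 0 m))).
  assert (HD : forall s, In s D -> in_kset (S k) (fun u => c <= u)%nat s).
  { intros s Hs. eapply in_kset_weaken; [|apply in_kset_choose_seq, Hs]. cbv beta. lia. }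
  assert (Havg := norm_average_decomp X (vsum X (map y (choose (seq 0 n) (S k))))
                    (fun t => vsum X (map (fun s => y (shift t s)) D)) (seq 0 m)
                    (INR ((n - W) * binom n k) * B)
                    ltac:(intros t Ht; apply in_seq in Ht; apply window_split; unfold W; lia)).
  rewrite length_seq, <- (vsum_exchange X (fun s t => y (shift t s))),
    (vsum_filter X block (gapb m)) in Havg.
  assert (Hgood : bs_norm X (vsum X (map block (filter (gapb m) D)))
                  <= INR (binom n (S k)) * (INR m * beta)).
  { eapply Rle_trans; [apply norm_vsum_le with (b := INR m * beta)|].
    - intros v Hv. apply in_map_iff in Hv. destruct Hv as [s [<- Hs]].
      apply filter_In in Hs. apply Hblock; [apply HD|]; tauto.
    - apply Rmult_le_compat_r; [apply Rmult_le_pos; [apply pos_INR | exact Hbeta]|].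
      apply le_INR. rewrite length_map. eapply Nat.le_trans; [apply filter_length_le|].
      unfold D. rewrite length_choose, length_seq. apply binom_mono. unfold W. lia. }
  assert (Hbad : bs_norm X (vsum X (map block (filter (fun s => negb (gapb m s)) D)))
                 <= INR (k * m * binom n k) * (INR m * B)).
  { eapply Rle_trans; [apply norm_vsum_le with (b := INR m * B)|].
    - intros v Hv. apply in_map_iff in Hv. destruct Hv as [s [<- Hs]].
      apply filter_In in Hs. destruct Hs as [Hs _].
      eapply Rle_trans; [apply norm_vsum_le with (b := B)|].
      + intros v Hv. apply in_map_iff in Hv. destruct Hv as [t [<- _]].
        apply y_bounded. eapply shift_in_kset; [|apply HD, Hs]. trivial.
      + rewrite length_map, length_seq. lra.
    - apply Rmult_le_compat_r; [apply Rmult_le_pos; [apply pos_INR | exact B_ge0]|].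
      apply le_INR. rewrite length_map. eapply Nat.le_trans; [apply count_nongap|].
      apply Nat.mul_le_mono_l, binom_mono. unfold W. lia. }
  assert (HmR : 1 <= INR m) by (apply (le_INR 1); exact Hm).
  replace (n - W)%nat with (m + c)%nat in Havg by (unfold W; lia).
  assert (Hsplit := bs_norm_triangle X (vsum X (map block (filter (gapb m) D)))
                      (vsum X (map block (filter (fun s => negb (gapb m s)) D)))).
  rewrite !mult_INR, !plus_INR, !mult_INR in *.
  apply (Rmult_le_reg_l (INR m)); [lra|]. nra.
Qed.


Lemma cesaro_mean_small (m c : nat) (eps : R) : (1 <= m)%nat -> 0 < eps ->
  (forall s, in_kset (S k) (fun u => c <= u)%nat s -> gapb m s = true ->
     bs_norm X (vsum X (map (fun t => y (shift t s)) (seq 0 m))) <= INR m * (eps / 2)) ->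
  exists N, forall n, (N <= n)%nat ->
    bs_norm X (vsum X (map y (choose (seq 0 n) (S k)))) / INR (binom n (S k)) < eps.
Proof.
  intros Hm Heps Hblock.
  destruct (binom_ratio_small k (INR (k * m + m + c) * B) (eps / 2) ltac:(lra)) as [N HN].
  exists (N + m + c + S k)%nat. intros n Hn.
  assert (Hest := averaging_estimate m c n (eps / 2) Hm ltac:(lia) ltac:(lra) Hblock).
  specialize (HN n ltac:(lia)).
  assert (HP : 0 < INR (binom n (S k))) by (apply (lt_INR 0), binom_pos; lia).
  apply (Rmult_lt_reg_r (INR (binom n (S k)))); [exact HP|].
  unfold Rdiv. rewrite Rmult_assoc, Rinv_l, Rmult_1_r by lra.
  rewrite !mult_INR in *. nra.
Qed.

End AveragingEstimate.

Lemma strictly_increasing_le (f : nat -> nat) :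
  strictly_increasing f -> forall i j, (i <= j)%nat -> (f i <= f j)%nat.
Proof. intros Hf i j Hij. destruct (Nat.eq_dec i j); [subst; lia | apply Nat.lt_le_incl, Hf; lia]. Qed.

Lemma subsequence_ge (M L : nat -> nat) : strictly_increasing M -> strictly_increasing L ->
  (forall i, in_range M (L i)) -> forall i, (M i <= L i)%nat.
Proof.
  intros HM HL Hr.
  assert (Hidx : forall i, exists p, (i <= p)%nat /\ M p = L i).
  { induction i as [|i [p [Hp1 Hp2]]].
    - destruct (Hr 0%nat) as [p Hp]. exists p. split; [lia | exact Hp].
    - destruct (Hr (S i)) as [q Hq]. exists q. split; [|exact Hq].
      destruct (Nat.le_gt_cases q p) as [Hqp|Hqp]; [|lia].
      assert (M q <= M p)%nat by (apply strictly_increasing_le; auto).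
      assert (L i < L (S i))%nat by (apply HL; lia). lia. }
  intro i. destruct (Hidx i) as [p [Hp1 Hp2]]. rewrite <- Hp2.
  apply strictly_increasing_le; auto.
Qed.

Section SpreadingBlocks.

Variable X : BanachSpace.
Variable k : nat.
Variable x : list nat -> X.
Variables M L : nat -> nat.
Variable ns : (nat -> R) -> R.
Variable delta : nat -> R.
Hypothesis M_incr : strictly_increasing M.
Hypothesis L_incr : strictly_increasing L.
Hypothesis L_in_M : forall i, in_range M (L i).
Hypothesis spreading :
  forall (l m : nat) (ss : nat -> list nat) (a : nat -> R),
    (1 <= l)%nat -> (m <= l)%nat -> plegma k M ss m ->
    (0 < m)%nat -> (M (l - 1)%nat <= nth 0 (ss 0%nat) 0)%nat ->
    (forall j, (j < m)%nat -> -1 <= a j <= 1) ->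
    Rabs (bs_norm X (vsum X (map (fun j => bs_scal X (a j) (x (ss j))) (seq 0 m)))
          - ns (trunc m a)) <= delta l.

Lemma nth_map_L_shift s i j : (i < length s)%nat ->
  nth i (map L (shift j s)) 0%nat = L (nth i s 0%nat + j)%nat.
Proof.
  intro Hi. unfold shift. rewrite map_map, (nth_indep _ 0%nat (L (0 + j))%nat)
    by (rewrite length_map; exact Hi).
  apply (map_nth (fun u => L (u + j)%nat)).
Qed.

Lemma shifted_plegma (P : nat -> Prop) (m : nat) s :
  in_kset k P s -> gapb m s = true -> plegma k M (fun j => map L (shift j s)) m.
Proof.
  intros Hs Hg. destruct Hs as [Hlen [Hinc HP]] eqn:Hs'.
  split; [|split].
  - intros j _. unfold shift. rewrite map_map.
    apply (in_kset_map k P (in_range M) (fun u => L (u + j)%nat)); [|intros; apply L_in_M|exact Hs].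
    intros u v Huv. apply L_incr. lia.
  - intros i j j' Hi Hjj Hj'. rewrite !nth_map_L_shift by lia. apply L_incr. lia.
  - intros i Hi Hm. rewrite !nth_map_L_shift by lia. apply L_incr.
    assert (H := gapb_spec m s Hg i ltac:(lia)). lia.
Qed.

Lemma block_bound (l m : nat) s : (1 <= m)%nat -> (m <= l)%nat -> (1 <= k)%nat ->
  in_kset k (fun u => l - 1 <= u)%nat s -> gapb m s = true ->
  bs_norm X (vsum X (map (fun t => x (map L (shift t s))) (seq 0 m)))
   <= INR m * (ns (trunc m (fun _ => / INR m)) + delta l).
Proof.
  intros Hm Hml Hk Hs Hg.
  assert (HmR : 1 <= INR m) by (apply (le_INR 1); exact Hm).
  assert (Hinv : 0 < / INR m) by (apply Rinv_0_lt_compat; lra).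
  assert (Hfirst : (M (l - 1) <= nth 0 (map L (shift 0 s)) 0)%nat).
  { destruct Hs as [Hlen [_ HP]].
    rewrite nth_map_L_shift, Nat.add_0_r by lia.
    assert (H0 : (l - 1 <= nth 0 s 0)%nat) by (apply HP, nth_In; lia).
    eapply Nat.le_trans; [apply strictly_increasing_le; eauto|].
    apply subsequence_ge; auto. }
  assert (Hcoef : forall j, (j < m)%nat -> -1 <= / INR m <= 1).
  { intros j _. split; [lra|]. rewrite <- Rinv_1. apply Rinv_le_contravar; lra. }
  assert (Hsp := spreading l m _ (fun _ => / INR m) ltac:(lia) Hml
                   (shifted_plegma _ m s Hs Hg) ltac:(lia) Hfirst Hcoef).
  rewrite <- map_map with (g := bs_scal X (/ INR m)), <- vsum_scal, bs_norm_scal,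
    (Rabs_right (/ INR m)) in Hsp by lra.
  apply (Rle_trans _ _ _ (Rle_abs _)) in Hsp.
  apply (Rmult_le_reg_l (/ INR m)); [exact Hinv|].
  rewrite <- Rmult_assoc, Rinv_l, Rmult_1_l by lra. lra.
Qed.

End SpreadingBlocks.

Lemma eventually_below (u : nat -> R) (eps : R) :
  Un_cv u 0 -> 0 < eps -> exists N, forall n, (N <= n)%nat -> u n < eps.
Proof.
  intros Hu Heps. destruct (Hu eps Heps) as [N HN]. exists N. intros n Hn.
  specialize (HN n Hn). unfold R_dist in HN. rewrite Rminus_0_r in HN.
  pose proof (Rle_abs (u n)). lra.
Qed.

Theorem mainTheorem14 (X : BanachSpace) (k : nat) (x : list nat -> X)
  (M : nat -> nat) (ns : (nat -> R) -> R) :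
  (1 <= k)%nat ->
  (exists B, forall s, in_kset k (fun _ => True) s -> bs_norm X (x s) <= B) ->
  strictly_increasing M ->
  c00_seminorm ns ->
  generates_spreading_model X k x M ns ->
  cesaro_zero ns ->
  forall L : nat -> nat, strictly_increasing L -> (forall i, in_range M (L i)) ->
    k_cesaro_summable X k x L (bs_zero X).
Proof.
  intros Hk [B HB] HM _ [delta [_ [Hdelta Hsp]]] Hces L HL HLM eps Heps.
  destruct k as [|k]; [lia|].
  assert (Hy : forall s, in_kset (S k) (fun _ => True) s -> bs_norm X (x (map L s)) <= Rmax B 0).
  { intros s Hs. eapply Rle_trans; [|apply Rmax_l]. apply HB.
    eapply in_kset_map; [exact HL | trivial | exact Hs]. }
  (* m with ||(e_1+...+e_m)/m|| < eps/4, and l >= m with delta_l < eps/4 *)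
  destruct (eventually_below _ (eps / 4) Hces ltac:(lra)) as [N1 HN1].
  destruct (eventually_below _ (eps / 4) Hdelta ltac:(lra)) as [N2 HN2].
  set (m := S N1). set (l := (N2 + m)%nat).
  assert (HmR : 0 < INR m) by (apply (lt_INR 0); unfold m; lia).
  assert (Hblock : forall s, in_kset (S k) (fun u => l - 1 <= u)%nat s -> gapb m s = true ->
     bs_norm X (vsum X (map (fun t => x (map L (shift t s))) (seq 0 m))) <= INR m * (eps / 2)).
  { intros s Hs Hg. eapply Rle_trans;
      [apply (block_bound X (S k) x M L ns delta HM HL HLM Hsp l m s); auto; unfold l, m; lia|].
    specialize (HN1 m ltac:(unfold m; lia)). specialize (HN2 l ltac:(unfold l; lia)). nra. }
  destruct (cesaro_mean_small X k (fun s => x (map L s)) (Rmax B 0) (Rmax_r B 0) Hy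
              m (l - 1) eps ltac:(unfold m; lia) Heps Hblock) as [N HN].
  exists (N + S k)%nat. intros n Hn.
  rewrite cesaro_mean_norm by lia. apply HN. lia.
Qed.
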